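(* Let $F$ be a field, $V$ a nonzero vector space over $F$, $\Gamma$ a nonempty set, $\varphi:\Gamma\to\Gamma$ a map and $\mathfrak{w}\in F^\Gamma$, and let $\sigma_{\varphi,\mathfrak{w}}:V^\Gamma\to V^\Gamma$, $(x_\alpha)_{\alpha\in\Gamma}\mapsto(\mathfrak{w}_\alpha x_{\varphi(\alpha)})_{\alpha\in\Gamma}$. If $W(\varphi)\setminus\downarrow\mathfrak{Z}\neq\varnothing$, then $F\setminus\{0\}\subseteq{\rm Eigen}(\sigma_{\varphi,\mathfrak{w}},V^\Gamma)$; moreover in this case ${\rm Eigen}(\sigma_{\varphi,\mathfrak{w}},V^\Gamma)=F\setminus\{0\}$ if $\varphi(\Gamma\setminus\mathfrak{Z})=\Gamma$, and ${\rm Eigen}(\sigma_{\varphi,\mathfrak{w}},V^\Gamma)=F$ otherwise.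
   Context: For a linear map $T:W\to W$ on an $F$-vector space $W$, ${\rm Eigen}(T,W)$ is the set of all $r\in F$ such that $T(x)=rx$ for some nonzero $x\in W$. $\mathfrak{Z}:=\{\alpha\in\Gamma:\mathfrak{w}_\alpha=0\}$ and $\downarrow\mathfrak{Z}:=\bigcup_{n\geq0}\varphi^{-n}(\mathfrak{Z})$. A point $a\in\Gamma$ is wandering if the sequence $(\varphi^n(a))_{n\geq1}$ is one-to-one; $W(\varphi)$ is the set of wandering points. *)

From HB Require Import structures.
From mathcomp Require Import all_boot all_order all_algebra.
Set Implicit Arguments. Unset Strict Implicit. Unset Printing Implicit Defensive.
Import GRing.Theory.
Local Open Scope ring_scope.

Definition sigma_op (F : fieldType) (V : lmodType F) (Gamma : Type)
  (phi : Gamma -> Gamma) (w : Gamma -> F) (x : Gamma -> V) : Gamma -> V :=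
  fun a => w a *: x (phi a).

Definition Eigen (F : fieldType) (V : lmodType F) (Gamma : Type)
  (T : (Gamma -> V) -> (Gamma -> V)) (r : F) : Prop :=
  exists x : Gamma -> V, x <> (fun _ => 0) /\ T x = (fun a => r *: x a).

Definition Zset (F : fieldType) (Gamma : Type) (w : Gamma -> F) (a : Gamma) : Prop :=
  w a = 0.

Definition downZ (F : fieldType) (Gamma : Type) (phi : Gamma -> Gamma)
  (w : Gamma -> F) (a : Gamma) : Prop :=
  exists n : nat, Zset w (iter n phi a).

Definition wandering (Gamma : Type) (phi : Gamma -> Gamma) (a : Gamma) : Prop :=
  forall m n : nat, iter m.+1 phi a = iter n.+1 phi a -> m = n.

From mathcomp Require Import all_boot all_order all_algebra.
From mathcomp Require Import ring.
From Stdlib Require Import Classical ClassicalEpsilon FunctionalExtensionality.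
Set Implicit Arguments.
Unset Strict Implicit.

Import GRing.Theory.
Local Open Scope ring_scope.

(* An eigenvector for r != 0 must satisfy w_b x_(phi b) = r x_b.  Starting from
   x_a = v at the wandering point a, this forces x_(phi^n a) = r^n / P_n v with
   P_n = w_a w_(phi a) ... w_(phi^(n-1) a) != 0 (as a is not in down Z), and then
   x_b = w_b ... w_(phi^(k-1) b) / r^k x_(phi^k b) whenever the orbit of b meets
   that of a; all other coordinates are 0.  Since a is wandering, the pair (k, n)
   with phi^k b = phi^n a is unique up to a common shift, which leaves the value
   unchanged, so x is well defined.  The eigenvalue 0 occurs iff some b is not the
   image of a point with nonzero weight: then the indicator of b, times a nonzero
   vector, is killed by sigma; otherwise sigma is injective. *)

Section WeightIter.
Variables (F : fieldType) (Gamma : Type) (phi : Gamma -> Gamma) (w : Gamma -> F).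

Definition weight_iter (n : nat) (b : Gamma) : F := \prod_(i < n) w (iter i phi b).

Lemma weight_iter0 b : weight_iter 0 b = 1.
Proof. exact: big_ord0. Qed.

Lemma weight_iterS n b : weight_iter n.+1 b = w b * weight_iter n (phi b).
Proof. by rewrite /weight_iter big_ord_recl; under eq_bigr do rewrite lift0 iterSr. Qed.

Lemma weight_iterD m n b :
  weight_iter (m + n) b = weight_iter m b * weight_iter n (iter m phi b).
Proof.
rewrite /weight_iter big_split_ord /=; congr (_ * _).
by apply: eq_bigr => i _; rewrite -iterD addnC.
Qed.

Lemma weight_iter_neq0 n b : ~ downZ phi w b -> weight_iter n b != 0.
Proof. by move=> bZ; apply/prodf_neq0 => i _; apply/eqP => wi0; apply: bZ; exists i. Qed.

Lemma downZ_iter n b : downZ phi w (iter n phi b) -> downZ phi w b.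
Proof. by case=> m wm0; exists (m + n)%N; rewrite iterD. Qed.

End WeightIter.

Section NonzeroEigenvalues.
Variables (F : fieldType) (V : lmodType F) (Gamma : Type).
Variables (phi : Gamma -> Gamma) (w : Gamma -> F) (a : Gamma) (r : F) (v : V).
Hypotheses (a_wandering : wandering phi a) (a_notin_downZ : ~ downZ phi w a).
Hypotheses (r_neq0 : r != 0) (v_neq0 : v != 0).

Lemma iter_wandering_inj m n : iter m phi a = iter n phi a -> m = n.
Proof. by move=> e; apply: a_wandering; rewrite !iterS e. Qed.

Definition meets_orbit (b : Gamma) (k n : nat) : Prop := iter k phi b = iter n phi a.

Definition eigen_coef (k n : nat) (b : Gamma) : F :=
  weight_iter phi w k b / weight_iter phi w n a * (r ^+ n / r ^+ k).

Lemma eigen_coef_shift d k n b :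
  meets_orbit b k n -> eigen_coef (k + d) (n + d) b = eigen_coef k n b.
Proof.
rewrite /meets_orbit /eigen_coef !weight_iterD => ->.
have Wn := weight_iter_neq0 n a_notin_downZ.
have Wd : weight_iter phi w d (iter n phi a) != 0.
  by apply: weight_iter_neq0 => Z; exact: a_notin_downZ (downZ_iter Z).
by rewrite !exprD; field; rewrite Wn Wd !expf_neq0.
Qed.

Lemma eigen_coef_unique b k n k' n' :
  meets_orbit b k n -> meets_orbit b k' n' -> eigen_coef k n b = eigen_coef k' n' b.
Proof.
wlog le_kk' : k n k' n' / (k <= k')%N => [sym|bkn bkn'].
  by case: (leqP k k') => [|/ltnW] le bkn bkn'; [|symmetry]; apply: sym.
move: bkn'; have [d ->] : exists d, k' = (k + d)%N by exists (k' - k)%N; rewrite subnKC.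
rewrite /meets_orbit addnC iterD bkn -iterD => /iter_wandering_inj <-.
by rewrite !(addnC d) eigen_coef_shift.
Qed.

Lemma eigen_coef_step k n b :
  w b * eigen_coef k n.+1 (phi b) = r * eigen_coef k.+1 n.+1 b.
Proof.
have Wn := weight_iter_neq0 n.+1 a_notin_downZ.
by rewrite /eigen_coef (weight_iterS _ _ k) (exprS r k); field; rewrite Wn r_neq0 expf_neq0.
Qed.

(* The index pair is chosen once, by [epsilon]; if it fails to meet the orbit
   of [a], then no pair does. *)
Definition eigen_vec (b : Gamma) : V :=
  let kn := epsilon (inhabits (0, 0)%N) (fun kn => meets_orbit b kn.1 kn.2) in
  if excluded_middle_informative (meets_orbit b kn.1 kn.2)
  then eigen_coef kn.1 kn.2 b *: v else 0.

Lemma eigen_vecE b k n : meets_orbit b k n -> eigen_vec b = eigen_coef k n b *: v.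
Proof.
move=> bkn; rewrite /eigen_vec; case: excluded_middle_informative => [bkn'|].
  by rewrite (eigen_coef_unique bkn' bkn).
by case; apply: (epsilon_spec _ (fun kn => meets_orbit b kn.1 kn.2)); exists (k, n).
Qed.

Lemma eigen_vec_out b : ~ (exists k n, meets_orbit b k n) -> eigen_vec b = 0.
Proof.
move=> bO; rewrite /eigen_vec; case: excluded_middle_informative => // bkn.
by case: bO; do 2!eexists; exact: bkn.
Qed.

Lemma eigen_vec_neq0 : eigen_vec <> (fun _ => 0).
Proof.
move=> /(congr1 (fun x => x a)); rewrite (@eigen_vecE a 0 0) //.
rewrite /eigen_coef weight_iter0 !expr0 divr1 mul1r scale1r => v0.
by move: v_neq0; rewrite v0 eqxx.
Qed.

Lemma sigma_eigen_vec : sigma_op phi w eigen_vec = (fun b => r *: eigen_vec b).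
Proof.
apply: functional_extensionality => b; rewrite /sigma_op.
case: (classic (exists k n, meets_orbit b k n)) => [[k [n bkn]]|bO].
  rewrite (@eigen_vecE _ k n.+1); last by rewrite /meets_orbit -iterSr iterS bkn.
  rewrite (@eigen_vecE _ k.+1 n.+1); last by rewrite /meets_orbit !iterS bkn.
  by rewrite !scalerA eigen_coef_step.
rewrite !eigen_vec_out ?scaler0 // => -[k [n pbkn]].
by apply: bO; exists k.+1, n; rewrite /meets_orbit iterSr.
Qed.

Lemma Eigen_wandering : Eigen (sigma_op (V:=V) phi w) r.
Proof. by exists eigen_vec; split; [exact: eigen_vec_neq0 | exact: sigma_eigen_vec]. Qed.

End NonzeroEigenvalues.

Section ZeroEigenvalue.
Variables (F : fieldType) (V : lmodType F) (Gamma : Type).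
Variables (phi : Gamma -> Gamma) (w : Gamma -> F).

Lemma not_Eigen0_surj :
  (forall b, exists a, ~ Zset w a /\ phi a = b) -> ~ Eigen (sigma_op (V:=V) phi w) 0.
Proof.
move=> surj [x [x_neq0 sigma_x]]; apply: x_neq0; apply: functional_extensionality => b.
have [c [wc_neq0 <-]] := surj b.
move: (congr1 (fun y => y c) sigma_x); rewrite /sigma_op scale0r => /eqP.
by rewrite scaler_eq0 => /orP[/eqP wc|/eqP].
Qed.

Lemma Eigen0_missed_point (b : Gamma) (v : V) :
  v != 0 -> ~ (exists a, ~ Zset w a /\ phi a = b) -> Eigen (sigma_op (V:=V) phi w) 0.
Proof.
move=> v_neq0 b_missed.
exists (fun c => if excluded_middle_informative (c = b) then v else 0); split.
  move=> /(congr1 (fun x => x b)); case: excluded_middle_informative => //= _ v0.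
  by move: v_neq0; rewrite v0 eqxx.
apply: functional_extensionality => c; rewrite /sigma_op scale0r.
case: (excluded_middle_informative (phi c = b)) => [pcb|?]; last by rewrite scaler0.
case: (classic (Zset w c)) => [->|wc]; first by rewrite scale0r.
by case: b_missed; exists c.
Qed.

End ZeroEigenvalue.

Theorem lemma2p5 (F : fieldType) (V : lmodType F) (Gamma : Type)
  (phi : Gamma -> Gamma) (w : Gamma -> F)
  (hV : exists v : V, v != 0) (hGamma : inhabited Gamma)
  (hW : exists a : Gamma, wandering phi a /\ ~ downZ phi w a) :
  (forall r : F, r != 0 -> Eigen (sigma_op (V:=V) phi w) r) /\
  ((forall b : Gamma, exists a : Gamma, ~ Zset w a /\ phi a = b) ->
     forall r : F, Eigen (sigma_op (V:=V) phi w) r <-> r != 0) /\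
  (~ (forall b : Gamma, exists a : Gamma, ~ Zset w a /\ phi a = b) ->
     forall r : F, Eigen (sigma_op (V:=V) phi w) r).
Proof.
(* [hGamma] is redundant: [hW] already provides a point. *)
have [v v_neq0] := hV; have [a [a_wandering a_notin_downZ]] := hW.
have nonzero r (r_neq0 : r != 0) : Eigen (sigma_op (V:=V) phi w) r.
  exact: Eigen_wandering a_wandering a_notin_downZ r_neq0 v_neq0.
split; [exact: nonzero | split].
  move=> surj r; split; last exact: nonzero.
  by apply: contraPneq => ->; exact: not_Eigen0_surj surj.
move=> not_surj r; have [b b_missed] := not_all_ex_not _ _ not_surj.
by case: (eqVneq r 0) => [->|]; [exact: Eigen0_missed_point v_neq0 b_missed | exact: nonzero].
Qed.
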